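(* Let $\Phi=(V,\mathcal C)$ be a $(k,d,s)$-CNF formula satisfying $k\ge\log d+\log k+\log(2\mathrm e)+s$, and let $c^*\notin\mathcal C$ be a clause on $k$ distinct variables with forbidden assignment $\sigma^*$. If there exists a clause $c'\in\mathcal C$ with $\mathrm{vbl}(c')=\mathrm{vbl}(c^* )$ but $c'\ne c^*$, then $$\Pr_{X\sim\mu_\Phi}[X_{\mathrm{vbl}(c^* )}=\sigma^*]\ge\Big(1-\frac12\exp\Big(\frac1k\Big)\Big)^k.$$
   Context: $\log$ denotes $\log_2$. A $(k,d,s)$-CNF formula is a CNF formula in which every clause contains exactly $k$ distinct variables, every variable appears in at most $d$ clauses, and any two distinct clauses share at most $s$ variables. $\mathrm{vbl}(c)$ is the variable set of clause $c$; the forbidden assignment of a clause is the unique assignment of its variables violating it. $\mu_\Phi$ is the uniform distribution over satisfying assignments of $\Phi$. *)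

From mathcomp Require Import all_boot.
From Stdlib Require Import Reals.
Set Implicit Arguments. Unset Strict Implicit. Unset Printing Implicit Defensive.

(* A clause over the finite variable set V: for each variable v,
   [c v = None] means v does not occur in c, and [c v = Some b] means v occurs
   in c and the forbidden assignment of c sets v to b
   (i.e. the literal of v in c is falsified exactly by the value b). *)
Definition clause (V : finType) := {ffun V -> option bool}.
Definition assignment (V : finType) := {ffun V -> bool}.

Definition vbl (V : finType) (c : clause V) : {set V} := [set v | c v != None].

Definition agrees_forbidden (V : finType) (c : clause V) (x : assignment V) : bool :=
  [forall v, if c v is Some b then x v == b else true].

Definition sat_clause (V : finType) (c : clause V) (x : assignment V) : bool :=
  ~~ agrees_forbidden c x.

Definition sat_formula (V : finType) (Phi : {set clause V}) (x : assignment V) : bool :=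
  [forall c in Phi, sat_clause c x].

Definition kds_CNF (V : finType) (k d s : nat) (Phi : {set clause V}) : Prop :=
  (forall c, c \in Phi -> #|vbl c| = k) /\
  (forall v : V, #|[set c in Phi | v \in vbl c]| <= d) /\
  (forall c c', c \in Phi -> c' \in Phi -> c != c' -> #|vbl c :&: vbl c'| <= s).

Definition log2 (x : R) : R := (ln x / ln 2)%R.

Definition muPr (V : finType) (Phi : {set clause V}) (E : pred (assignment V)) : R :=
  (INR #|[set x : assignment V | sat_formula Phi x && E x]|
   / INR #|[set x : assignment V | sat_formula Phi x]|)%R.

(* Pin the variables of vbl cstar one at a time to the values of the forbidden
   assignment of cstar, starting with a variable v1 on which c' and cstar disagree;
   the probability to bound is the ratio of the final to the initial number of
   solutions. Once v1 is pinned every remaining assignment satisfies c', so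
   each clause keeps at least k - s unpinned variables (it shares at most s
   with vbl c' = vbl cstar) and is violated with relative frequency at most
   2^-(k-s). This is the condition of the symmetric local lemma with weight
   x = 1/(kd+1), and its counting form relative to the pinned assignments
   shows that the next variable w, which lies in at most d clauses, takes the
   unwanted value on at most a fraction (1-x)^-d / 2 <= e^(1/k) / 2 of the
   solutions. So each of the k steps keeps a fraction 1 - e^(1/k)/2, and the
   local lemma also makes the initial count positive. *)

From mathcomp Require Import all_boot.
From Stdlib Require Import Reals Lra.
(* Reals redeclares the nat arithmetic notations; restore ssrnat's. *)
Import ssrnat.
Set Implicit Arguments. Unset Strict Implicit. Unset Printing Implicit Defensive.

Section Assignments.
Variable V : finType.
Implicit Types (W P : {set V}) (c : clause V) (T : {set clause V}).
Implicit Types (x y tau : assignment V) (H : {set assignment V}).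

Definition agree_off W x y := forall v, v \notin W -> x v = y v.

Definition invariant_off W H := forall x y, agree_off W x y -> (x \in H) = (y \in H).

Definition forbidden c : assignment V := [ffun v => odflt false (c v)].

(* Overwriting the coordinates in W injects the assignments of H equal to tau
   on W, paired with all 2 ^ #|W| patterns on W, into H. *)
Lemma card_agree_on_mul_exp2 W tau H : invariant_off W H ->
  #|[set x in H | [forall w in W, x w == tau w]]| * 2 ^ #|W| <= #|H|.
Proof.
move=> invH; set E := [set x in H | _].
set Y := [set y : assignment V in pffun_on false W predT].
have cardY : #|Y| = 2 ^ #|W|.
  by rewrite cardsE card_pffun_on (@eq_card _ _ {: bool}) ?card_bool.
pose f (xy : assignment V * assignment V) : assignment V :=
  [ffun v => if v \in W then xy.2 v else xy.1 v].
rewrite -cardY -cardsX -(card_in_imset (f := f)).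
  apply: subset_leq_card; apply/subsetP => _ /imsetP [[x y] /setXP [xE _] ->].
  move: xE; rewrite inE => /andP [xH _]; rewrite -(invH x) //.
  by move=> v vW; rewrite ffunE /= (negbTE vW).
have offW (y : assignment V) v : y \in Y -> v \notin W -> y v = false.
  rewrite inE => /pffun_onP [/subsetP yW _] vW.
  by apply/eqP/negPn/negP => /yW; rewrite (negbTE vW).
move=> [x y] [x' y'] /setXP [xE yY] /setXP [x'E y'Y] eqf.
move: xE x'E; rewrite !inE => /andP [_ /forall_inP xtau] /andP [_ /forall_inP x'tau].
congr pair; apply/ffunP => v; have := congr1 (fun g : assignment V => g v) eqf;
  rewrite /f !ffunE /=; case: ifPn => vW // _.
- by rewrite (eqP (xtau v vW)) (eqP (x'tau v vW)).
- by rewrite !offW.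
Qed.

Lemma forbidden_vbl c v : v \in vbl c -> c v = Some (forbidden c v).
Proof. by rewrite inE ffunE; case: (c v). Qed.

Lemma agrees_forbiddenE c x :
  agrees_forbidden c x = [forall v in vbl c, x v == forbidden c v].
Proof.
apply/forallP/forall_inP => agr v; have := agr v; rewrite ?inE ffunE;
  by case: (c v) => //= b; by [move=> -> | apply].
Qed.

Lemma card_agrees_forbidden_mul_exp2 c W H : W \subset vbl c -> invariant_off W H ->
  #|[set x in H | agrees_forbidden c x]| * 2 ^ #|W| <= #|H|.
Proof.
move=> /subsetP sWc invH; apply: leq_trans (card_agree_on_mul_exp2 (forbidden c) invH).
rewrite leq_mul2r; apply/orP; right; apply/subset_leq_card/subsetP => x.
rewrite !inE agrees_forbiddenE => /andP [-> /forall_inP agr].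
by apply/forall_inP => w /sWc /agr.
Qed.

Lemma agrees_forbidden_off W c x y : [disjoint vbl c & W] -> agree_off W x y ->
  agrees_forbidden c x = agrees_forbidden c y.
Proof.
move=> dis xy; rewrite !agrees_forbiddenE; apply: eq_forallb_in => v vc.
by rewrite xy // (disjointFr dis).
Qed.

Lemma sat_formula_off W T x y : {in T, forall c, [disjoint vbl c & W]} ->
  agree_off W x y -> sat_formula T x = sat_formula T y.
Proof.
move=> dis xy; apply: eq_forallb_in => c cT.
by rewrite /sat_clause (agrees_forbidden_off (dis c cT) xy).
Qed.

Lemma sat_formulaU1 c T x : sat_formula (c |: T) x = sat_clause c x && sat_formula T x.
Proof.
apply/forall_inP/andP => [satx | [satc /forall_inP satT] c'].
  by split; [|apply/forall_inP => c' c'T]; apply: satx; rewrite !inE ?eqxx ?c'T ?orbT.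
by case/setU1P => [-> | /satT].
Qed.

Lemma sat_formulaS T T' x : T \subset T' -> sat_formula T' x -> sat_formula T x.
Proof. by move=> /subsetP sTT' /forall_inP satx; apply/forall_inP => c /sTT' /satx. Qed.

Definition pinned tau P := [set x : assignment V | [forall v in P, x v == tau v]].

Lemma pinnedU1 tau w P x :
  (x \in pinned tau (w |: P)) = (x w == tau w) && (x \in pinned tau P).
Proof.
rewrite !inE; apply/forall_inP/andP => [pin | [xw /forall_inP pin] v].
  by split; [|apply/forall_inP => v vP]; apply: pin; rewrite !inE ?eqxx ?vP ?orbT.
by case/setU1P => [-> | /pin].
Qed.

Lemma invariant_offS W W' H : W \subset W' -> invariant_off W' H -> invariant_off W H.
Proof.
move=> /subsetP sWW' invH x y xy; apply: invH => v vW'.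
by apply: xy; apply: contra vW'; apply: sWW'.
Qed.

Lemma invariant_offI W G H :
  invariant_off W G -> invariant_off W H -> invariant_off W (G :&: H).
Proof. by move=> invG invH x y xy; rewrite !inE (invG x y xy) (invH x y xy). Qed.

Lemma invariant_off_pinned W tau P : [disjoint P & W] -> invariant_off W (pinned tau P).
Proof.
move=> dis x y xy; rewrite !inE; apply: eq_forallb_in => v vP.
by rewrite xy // (disjointFr dis).
Qed.

End Assignments.

Lemma card_clauses_meeting_le (V : finType) (Phi : {set clause V}) d (S : {set V}) :
  (forall v, #|[set c in Phi | v \in vbl c]| <= d) ->
  #|[set c in Phi | ~~ [disjoint S & vbl c]]| <= #|S| * d.
Proof.
move=> deg.
have -> : [set c in Phi | ~~ [disjoint S & vbl c]] =
          \bigcup_(v in S) [set c in Phi | v \in vbl c].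
  apply/setP => c; rewrite inE -setI_eq0; apply/andP/bigcupP.
    by case=> cPhi /set0Pn [v /setIP [vS vc]]; exists v => //; apply/setIdP.
  by case=> v vS /setIdP [cPhi vc]; split => //; apply/set0Pn; exists v; apply/setIP.
rewrite -sum_nat_const.
apply: (@leq_trans (\sum_(v in S) #|[set c in Phi | v \in vbl c]|)); last exact: leq_sum.
elim/big_rec2: _ => [|v n A _ An]; first by rewrite cards0.
exact: leq_trans (leq_card_setU _ A).1 (leq_add (leqnn _) An).
Qed.

Lemma pow_le_decr (y : R) m n : (0 <= y <= 1)%R -> m <= n -> (y ^ n <= y ^ m)%R.
Proof.
move=> y01 /subnKC <-; rewrite pow_add.
have : (y ^ (n - m) <= 1 ^ (n - m))%R by apply: pow_incr.
have : (0 <= y ^ m)%R by apply: pow_le; lra.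
rewrite pow1; nra.
Qed.

Lemma one_add_pow_le_exp (y : R) n : (0 <= y)%R -> ((1 + y) ^ n <= exp (INR n * y))%R.
Proof.
move=> y0; elim: n => [|n IH]; first by rewrite /= Rmult_0_l exp_0; lra.
rewrite S_INR Rmult_plus_distr_r Rmult_1_l exp_plus /= Rmult_comm.
apply: Rmult_le_compat => //; [by apply: pow_le; lra | lra | exact: exp_ineq1_le].
Qed.

Lemma INR_expn m n : INR (m ^ n) = (INR m ^ n)%R.
Proof. by elim: n => [|n IH]; rewrite ?expnS ?mult_INR ?IH. Qed.

Lemma INR_le_inv_pow2 a b m n : a * 2 ^ m <= b -> n <= m ->
  (INR a <= / 2 ^ n * INR b)%R.
Proof.
move=> /leP/le_INR; rewrite mult_INR INR_expn => amb /leP nm.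
have pow_n_gt0 : (0 < 2 ^ n)%R by apply: pow_lt; lra.
have anb : (INR a * 2 ^ n <= INR b)%R.
  apply: Rle_trans amb; apply: Rmult_le_compat_l; first exact: pos_INR.
  by apply: Rle_pow; [lra | exact: nm].
apply: (Rmult_le_reg_r (2 ^ n)) => //.
by rewrite (Rmult_comm (/ _)) Rmult_assoc Rinv_l ?Rmult_1_r //; lra.
Qed.

Definition sols (V : finType) (F : {set assignment V}) (T : {set clause V}) :=
  [set x in F | sat_formula T x].

Lemma in_sols (V : finType) (F : {set assignment V}) T x :
  (x \in sols F T) = (x \in F) && sat_formula T x.
Proof. by rewrite inE. Qed.

Section CountingLLL.
Variables (V : finType) (F : {set assignment V}) (C : {set clause V}).
Variables (p x : R) (Delta : nat).
Implicit Types (c : clause V) (T : {set clause V}).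

Local Notation bad c T := [set z in sols F T | agrees_forbidden c z].

Hypothesis clause_prob : forall c (G : {set assignment V}),
  c \in C -> invariant_off (vbl c) G ->
  (INR #|[set z in G :&: F | agrees_forbidden c z]| <= p * INR #|G :&: F|)%R.
Hypothesis dependency_deg : forall c,
  c \in C -> #|[set c' in C | ~~ [disjoint vbl c & vbl c']]| <= Delta.
Hypothesis x01 : (0 <= x < 1)%R.
Hypothesis p_le : (p <= x * (1 - x) ^ Delta)%R.

Lemma card_sols_setU1 c T : #|sols F T| = #|sols F (c |: T)| + #|bad c T|.
Proof.
rewrite -(cardsID [set z | agrees_forbidden c z] (sols F T)) addnC.
by congr (_ + _); apply: eq_card => z; rewrite !inE ?sat_formulaU1 /sat_clause;
  case: (z \in F); case: (agrees_forbidden c z); case: (sat_formula T z).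
Qed.

Lemma sols_setU1_ge c T : (INR #|bad c T| <= x * INR #|sols F T|)%R ->
  ((1 - x) * INR #|sols F T| <= INR #|sols F (c |: T)|)%R.
Proof. by rewrite (card_sols_setU1 c T) plus_INR; nra. Qed.

Lemma sols_subset_ge_upto m :
  (forall c T, #|T| < m -> T \subset C -> c \in C ->
     (INR #|bad c T| <= x * INR #|sols F T|)%R) ->
  forall T T', T \subset T' -> T' \subset C -> #|T'| <= m ->
  ((1 - x) ^ #|T' :\: T| * INR #|sols F T| <= INR #|sols F T'|)%R.
Proof.
move=> bad_small T T' + sT'C T'm; move Hn: #|T' :\: T| => n.
elim: n T Hn => [|n IH] T Hn sTT'.
  have -> : T = T' by apply/eqP; rewrite eqEsubset sTT' -setD_eq0 -cards_eq0 Hn.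
  by rewrite /=; lra.
have [c cT'T] : exists c, c \in T' :\: T by apply/set0Pn; rewrite -card_gt0 Hn.
have /setDP [cT' cT] := cT'T.
have scTT' : c |: T \subset T' by rewrite subUset sub1set cT' sTT'.
have rest : ((1 - x) ^ n * INR #|sols F (c |: T)| <= INR #|sols F T'|)%R.
  apply: IH scTT'.
  by move: Hn; rewrite (cardsD1 c) cT'T setDDl setUC => -[].
have Tm : #|T| < m.
  by move: (subset_leq_card scTT'); rewrite cardsU1 cT add1n => /leq_trans; apply.
have step := sols_setU1_ge (bad_small c T Tm (subset_trans sTT' sT'C) (subsetP sT'C c cT')).
have pw0 : (0 <= (1 - x) ^ n)%R by apply: pow_le; lra.
have := Rmult_le_compat_l _ _ _ pw0 step.
by rewrite -tech_pow_Rmult; lra.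
Qed.

Lemma card_bad_le n c T : #|T| < n -> T \subset C -> c \in C ->
  (INR #|bad c T| <= x * INR #|sols F T|)%R.
Proof.
elim: n c T => [//|n IH] c T; rewrite ltnS => Tn sTC cC.
pose T0 := [set c' in T | [disjoint vbl c & vbl c']].
have sT0T : T0 \subset T by apply/subsetP => c'; rewrite inE => /andP [].
have peel := sols_subset_ge_upto IH sT0T sTC Tn.
have bad0 : (INR #|bad c T0| <= p * INR #|sols F T0|)%R.
  have eqG : [set z | sat_formula T0 z] :&: F = sols F T0.
    by apply/setP => z; rewrite !inE andbC.
  rewrite -eqG; apply: clause_prob cC _ => y z yz; rewrite !inE.
  by apply: sat_formula_off yz => c'; rewrite inE disjoint_sym => /andP [].
have badT : #|bad c T| <= #|bad c T0|.
  apply/subset_leq_card/subsetP => z; rewrite !inE => /andP [/andP [-> satT] ->].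
  by rewrite (sat_formulaS sT0T satT).
have degT : #|T :\: T0| <= Delta.
  apply: leq_trans (dependency_deg cC); apply/subset_leq_card/subsetP => c'.
  by rewrite !inE => /andP [+ c'T]; rewrite c'T (subsetP sTC _ c'T).
have pw : ((1 - x) ^ Delta <= (1 - x) ^ #|T :\: T0|)%R by apply: pow_le_decr => //; lra.
have s0 := pos_INR #|sols F T0|.
apply: Rle_trans (le_INR _ _ (elimT leP badT)) _.
apply: Rle_trans bad0 _; apply: Rle_trans (Rmult_le_compat_r _ _ _ s0 p_le) _.
rewrite Rmult_assoc; apply: Rmult_le_compat_l; first lra.
exact: Rle_trans (Rmult_le_compat_r _ _ _ s0 pw) peel.
Qed.

Lemma sols_subset_ge T T' : T \subset T' -> T' \subset C ->
  ((1 - x) ^ #|T' :\: T| * INR #|sols F T| <= INR #|sols F T'|)%R.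
Proof. by move=> sTT' sT'C; apply: (sols_subset_ge_upto (@card_bad_le #|T'|)). Qed.

Lemma sols_value_le w b dd :
  invariant_off [set w] F -> #|[set c in C | w \in vbl c]| <= dd ->
  ((1 - x) ^ dd * INR #|[set z in sols F C | z w == b]| <= / 2 * INR #|sols F C|)%R.
Proof.
move=> invF degw; pose C0 := [set c in C | w \notin vbl c].
have sC0 : C0 \subset C by apply/subsetP => c; rewrite inE => /andP [].
have peel := sols_subset_ge sC0 (subxx C).
have degC0 : #|C :\: C0| <= dd.
  apply: leq_trans degw; apply/subset_leq_card/subsetP => c.
  by case/setDP => cC; rewrite !inE cC /= negbK.
have half : #|[set z in sols F C0 | z w == b]| * 2 <= #|sols F C0|.
  have inv0 : invariant_off [set w] (sols F C0).
    move=> y z yz; rewrite !inE (invF y z yz); congr andb.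
    apply: sat_formula_off yz => c /setIdP [_ wc].
    by rewrite disjoint_sym disjoints1.
  apply: leq_trans (card_agree_on_mul_exp2 [ffun _ => b] inv0).
  rewrite cards1 leq_mul2r; apply/orP; right; apply/subset_leq_card/subsetP => z.
  by rewrite !inE => /andP [-> /eqP zw]; apply/forall_inP => v /set1P ->; rewrite ffunE zw.
have sub : #|[set z in sols F C | z w == b]| <= #|[set z in sols F C0 | z w == b]|.
  apply/subset_leq_card/subsetP => z; rewrite !inE => /andP [/andP [-> satC] ->].
  by rewrite (sat_formulaS sC0 satC).
have pw : ((1 - x) ^ dd <= (1 - x) ^ #|C :\: C0|)%R by apply: pow_le_decr => //; lra.
have pw0 : (0 <= (1 - x) ^ dd)%R by apply: pow_le; lra.
have u0 : (0 <= (1 - x) ^ #|C :\: C0|)%R by apply: pow_le; lra.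
have half_R : (INR #|[set z in sols F C0 | z w == b]| <= / 2 * INR #|sols F C0|)%R.
  by move/leP/le_INR: half; rewrite mult_INR /=; lra.
apply: Rle_trans (Rmult_le_compat_l _ _ _ pw0 (le_INR _ _ (elimT leP sub))) _.
apply: Rle_trans (Rmult_le_compat_r _ _ _ (pos_INR _) pw) _.
apply: Rle_trans (Rmult_le_compat_l _ _ _ u0 half_R) _.
by rewrite -Rmult_assoc (Rmult_comm _ (/ 2)) Rmult_assoc; apply: Rmult_le_compat_l; lra.
Qed.

End CountingLLL.

Definition lll_x (k d : nat) : R := / (INR k * INR d + 1).

Section Numerics.
Variables k d s : nat.
Hypothesis k_gt0 : 0 < k.
Hypothesis d_gt0 : 0 < d.
Hypothesis log_cond :
  (INR k >= log2 (INR d) + log2 (INR k) + log2 (2 * exp 1) + INR s)%R.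

Local Notation x := (lll_x k d).

Let K1 : (1 <= INR k)%R. Proof. by apply: (le_INR 1); apply/leP. Qed.
Let D1 : (1 <= INR d)%R. Proof. by apply: (le_INR 1); apply/leP. Qed.
Let e_gt1 : (1 < exp 1)%R. Proof. have := exp_ineq1_le 1; lra. Qed.

Lemma two_e_kd_le_pow2 : (2 * exp 1 * (INR k * INR d) <= 2 ^ (k - s))%R.
Proof.
have ln2_gt0 : (0 < ln 2)%R by rewrite -ln_1; apply: ln_increasing; lra.
have kd1 : (1 <= INR k * INR d)%R by nra.
have M_gt1 : (1 < 2 * exp 1 * (INR k * INR d))%R by nra.
have lnM : (ln (2 * exp 1 * (INR k * INR d)) <= (INR k - INR s) * ln 2)%R.
  have div_ln2 a : (a / ln 2 * ln 2 = a)%R by field; lra.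
  have := Rmult_le_compat_r _ _ _ (Rlt_le _ _ ln2_gt0) (Rge_le _ _ log_cond).
  rewrite (ln_mult (2 * exp 1)) ?(ln_mult (INR k)); try nra.
  rewrite /log2 !Rmult_plus_distr_r !div_ln2; lra.
have lnM_gt0 : (0 < ln (2 * exp 1 * (INR k * INR d)))%R.
  by rewrite -ln_1; apply: ln_increasing; lra.
have s_lt_k : s < k by apply/ltP/INR_lt; nra.
apply: Rnot_lt_le => lt; have := ln_increasing _ _ (pow_lt 2 (k - s) ltac:(lra)) lt.
rewrite ln_pow; last lra.
by rewrite minus_INR; [lra | apply/leP/ltnW].
Qed.

Lemma two_le_k : 1 < k.
Proof.
rewrite ltnNge; apply/negP => k_le1.
have : (2 ^ (k - s) <= 2 ^ 1)%R.
  by apply: Rle_pow; [lra | apply/leP; apply: leq_trans (leq_subr s k) k_le1].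
have := two_e_kd_le_pow2; have : (1 <= INR k * INR d)%R by nra.
rewrite /=; nra.
Qed.

Lemma lll_x_range : (0 <= x < 1)%R.
Proof.
have kd1 : (1 <= INR k * INR d)%R by nra.
rewrite /lll_x; split; first by left; apply: Rinv_0_lt_compat; lra.
by rewrite -Rinv_1; apply: Rinv_lt_contravar; lra.
Qed.

Lemma one_sub_lll_x_pow_ge n : (/ exp (INR n / (INR k * INR d)) <= (1 - x) ^ n)%R.
Proof.
have kd1 : (1 <= INR k * INR d)%R by nra.
have iM0 : (0 < / (INR k * INR d))%R by apply: Rinv_0_lt_compat; lra.
have -> : (1 - x = / (1 + / (INR k * INR d)))%R by rewrite /lll_x; field; lra.
rewrite pow_inv; apply: Rinv_le_contravar; first by apply: pow_lt; lra.
by apply: one_add_pow_le_exp; lra.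
Qed.

Lemma pow2_inv_le : (/ 2 ^ (k - s) <= x * (1 - x) ^ (k * d))%R.
Proof.
have kd1 : (1 <= INR k * INR d)%R by nra.
have := one_sub_lll_x_pow_ge (k * d); rewrite mult_INR.
have -> : (INR k * INR d / (INR k * INR d) = 1)%R by field; lra.
move=> inv_e_le; have [x0 _] := lll_x_range.
apply: Rle_trans (Rmult_le_compat_l _ _ _ x0 inv_e_le).
rewrite /lll_x -Rinv_mult; apply: Rinv_le_contravar.
  by apply: Rmult_lt_0_compat; [lra | exact: exp_pos].
by have := two_e_kd_le_pow2; nra.
Qed.

Lemma exp_inv_k_mul_pow_ge1 : (1 <= exp (/ INR k) * (1 - x) ^ d)%R.
Proof.
have := one_sub_lll_x_pow_ge d.
have -> : (INR d / (INR k * INR d) = / INR k)%R by field; lra.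
move=> h; have := Rmult_le_compat_l _ _ _ (Rlt_le _ _ (exp_pos (/ INR k))) h.
by rewrite Rinv_r //; apply: Rgt_not_eq; exact: exp_pos.
Qed.

Lemma one_sub_half_exp_inv_ge0 : (0 <= 1 - / 2 * exp (/ INR k))%R.
Proof.
have k2 : (2 <= INR k)%R by apply: (le_INR 2); apply/leP; exact: two_le_k.
have inv_k : (/ INR k <= / 2)%R by apply: Rinv_le_contravar; lra.
have ek : (exp (/ INR k) * exp (/ INR k) <= exp 1)%R.
  rewrite -exp_plus; case: (Rle_lt_or_eq_dec (/ INR k + / INR k) 1 ltac:(lra)).
    by move/exp_increasing; lra.
  by move=> ->; lra.
by have := exp_le_3; have := exp_pos (/ INR k); nra.
Qed.

End Numerics.

Section PinningForbiddenAssignment.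
Variables (V : finType) (k d s : nat) (Phi : {set clause V}) (cstar c' : clause V) (v1 : V).
Hypothesis Phi_kds : kds_CNF k d s Phi.
Hypothesis c'_in : c' \in Phi.
Hypothesis vbl_c' : vbl c' = vbl cstar.
Hypothesis v1_in : v1 \in vbl cstar.
Hypothesis c'_v1 : c' v1 != Some (forbidden cstar v1).
Hypothesis k_gt0 : 0 < k.
Hypothesis d_gt0 : 0 < d.
Hypothesis log_cond :
  (INR k >= log2 (INR d) + log2 (INR k) + log2 (2 * exp 1) + INR s)%R.

Local Notation pin := (pinned (forbidden cstar)).
Local Notation ratio := (1 - / 2 * exp (/ INR k))%R.

Lemma card_agrees_pinned_le (P : {set V}) :
  P \subset vbl cstar -> (v1 \in P) || (P == set0) ->
  forall c (G : {set assignment V}), c \in Phi -> invariant_off (vbl c) G ->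
  (INR #|[set z in G :&: pin P | agrees_forbidden c z]| <=
     / 2 ^ (k - s) * INR #|G :&: pin P|)%R.
Proof.
move=> sP P_v1 c G cPhi invG; have [vbl_k [_ share]] := Phi_kds.
case: (boolP ((c == c') && (v1 \in P))) => [/andP [/eqP -> v1P] | free].
  have -> : [set z in G :&: pin P | agrees_forbidden c' z] = set0.
    apply/setP => z; rewrite !inE; apply/negbTE/andP => -[/andP [_ /forall_inP pin_z]].
    rewrite agrees_forbiddenE => /forall_inP agr_z.
    have v1c' : v1 \in vbl c' by rewrite vbl_c'.
    move: c'_v1; rewrite (forbidden_vbl v1c') -(eqP (agr_z v1 v1c')) (eqP (pin_z v1 v1P)).
    by rewrite eqxx.
  rewrite cards0; apply: Rmult_le_pos; last exact: pos_INR.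
  by left; apply/Rinv_0_lt_compat/pow_lt; lra.
have shared : #|vbl c :&: P| <= s.
  case: (eqVneq c c') free => [-> /= v1P | neq _].
    have -> : P = set0 by move: P_v1; rewrite (negbTE v1P) => /eqP.
    by rewrite setI0 cards0.
  apply: leq_trans (share c c' cPhi c'_in neq); apply/subset_leq_card.
  by rewrite vbl_c' setIS.
apply: (INR_le_inv_pow2 (m := #|vbl c :\: P|)).
  apply: card_agrees_forbidden_mul_exp2; first exact: subsetDl.
  apply: invariant_offI; first exact: invariant_offS (subsetDl _ _) invG.
  apply: invariant_off_pinned.
  by have := subxx (vbl c :\: P); rewrite subsetD disjoint_sym => /andP [].
by rewrite cardsD vbl_k // leq_sub2l.
Qed.

Lemma card_dependent_clauses_le c : c \in Phi ->
  #|[set c0 in Phi | ~~ [disjoint vbl c & vbl c0]]| <= k * d.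
Proof.
have [vbl_k [deg _]] := Phi_kds.
by move=> cPhi; rewrite -(vbl_k c cPhi); apply: card_clauses_meeting_le.
Qed.

Lemma sols_pinnedU1_ge (P : {set V}) w :
  P \subset vbl cstar -> (v1 \in P) || (P == set0) -> w \notin P ->
  (ratio * INR #|sols (pin P) Phi| <= INR #|sols (pin (w |: P)) Phi|)%R.
Proof.
move=> sP P_v1 wP; have [_ [deg _]] := Phi_kds.
have wP' : [disjoint P & [set w]] by rewrite disjoint_sym disjoints1.
have flip_le := sols_value_le (card_agrees_pinned_le sP P_v1) card_dependent_clauses_le
  (lll_x_range k_gt0 d_gt0) (pow2_inv_le k_gt0 d_gt0 log_cond) (~~ forbidden cstar w)
  (invariant_off_pinned _ wP') (deg w).
have split : #|sols (pin P) Phi| = #|sols (pin (w |: P)) Phi| +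
                                   #|[set z in sols (pin P) Phi | z w == ~~ forbidden cstar w]|.
  rewrite -(cardsID [set z : assignment V | z w == forbidden cstar w] (sols (pin P) Phi)).
  congr (_ + _); apply: eq_card => z.
    by rewrite in_setI !in_sols pinnedU1 inE; case: (z w == _); rewrite /= ?andbT ?andbF.
  by rewrite in_setD !inE; case: (z w); case: (forbidden cstar w); rewrite /= ?andbT ?andbF.
move/(congr1 INR): split; rewrite plus_INR => split.
have := exp_inv_k_mul_pow_ge1 k_gt0 d_gt0; move: flip_le (exp_pos (/ INR k)).
move: (exp _) ((1 - lll_x k d) ^ d)%R => e u flip_le e_gt0 one.
have E0 := pos_INR #|[set z in sols (pin P) Phi | z w == ~~ forbidden cstar w]|.
have := Rmult_le_compat_r _ _ _ E0 one.
have := Rmult_le_compat_l _ _ _ (Rlt_le _ _ e_gt0) flip_le.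
lra.
Qed.

Lemma sols_pinned_ge n (P : {set V}) : #|P| = n.+1 -> P \subset vbl cstar -> v1 \in P ->
  (ratio ^ n.+1 * INR #|sols (pin set0) Phi| <= INR #|sols (pin P) Phi|)%R.
Proof.
have ratio0 := one_sub_half_exp_inv_ge0 k_gt0 d_gt0 log_cond.
have set0_ok : (v1 \in set0) || (set0 == set0 :> {set V}) by rewrite eqxx orbT.
elim: n P => [|n IH] P cardP sP v1P.
  move/eqP/cards1P: cardP v1P => [u ->] /set1P <-.
  rewrite /= Rmult_1_r -[[set v1]]setU0.
  by apply: sols_pinnedU1_ge; rewrite ?sub0set ?in_set0 ?eqxx.
have [w /setD1P [wv1 wP]] : exists w, w \in P :\ v1.
  by apply/set0Pn; rewrite -card_gt0; move: cardP; rewrite (cardsD1 v1) v1P add1n => -[->].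
have sPw : P :\ w \subset vbl cstar by apply: subset_trans sP; apply: subD1set.
have v1Pw : v1 \in P :\ w by rewrite !inE eq_sym wv1.
have cardPw : #|P :\ w| = n.+1 by move: cardP; rewrite (cardsD1 w) wP add1n => -[].
have chain := IH _ cardPw sPw v1Pw.
have := sols_pinnedU1_ge sPw (introT orP (or_introl v1Pw)) (negbT (setD11 w P)).
rewrite setD1K // => step; apply: Rle_trans step.
by rewrite /= Rmult_assoc; apply: Rmult_le_compat_l.
Qed.

Lemma sols_pinned0_gt0 : (0 < INR #|sols (pin set0) Phi|)%R.
Proof.
have set0_ok : (v1 \in set0) || (set0 == set0 :> {set V}) by rewrite eqxx orbT.
have x01 := lll_x_range k_gt0 d_gt0.
have := sols_subset_ge (card_agrees_pinned_le (sub0set _) set0_ok) card_dependent_clauses_le x01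
  (pow2_inv_le k_gt0 d_gt0 log_cond) (sub0set Phi) (subxx Phi).
have : 0 < #|sols (pin set0) set0|.
  by apply/card_gt0P; exists [ffun => false]; rewrite in_sols !inE; apply/andP; split;
    apply/forall_inP => ?; rewrite inE.
move=> /leP/(lt_INR 0) /= sols00 lower.
apply: Rlt_le_trans lower; apply: Rmult_lt_0_compat => //; apply: pow_lt; lra.
Qed.

Lemma muPr_forbidden_ge : #|vbl cstar| = k ->
  (ratio ^ k <= muPr Phi (agrees_forbidden cstar))%R.
Proof.
move=> card_k.
have := @sols_pinned_ge k.-1 (vbl cstar); rewrite prednK // => /(_ card_k (subxx _) v1_in).
have num : #|[set x | sat_formula Phi x && agrees_forbidden cstar x]| =
           #|sols (pin (vbl cstar)) Phi|.
  by apply: eq_card => z; rewrite in_sols !inE agrees_forbiddenE andbC.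
have den : #|[set x | sat_formula Phi x]| = #|sols (pin set0) Phi|.
  apply: eq_card => z.
  have pin0 : z \in pin set0 by rewrite inE; apply/forall_inP => ?; rewrite inE.
  by rewrite in_sols pin0 inE.
rewrite /muPr num den => chain; have N0 := sols_pinned0_gt0.
apply: (Rmult_le_reg_r _ _ _ N0); rewrite /Rdiv Rmult_assoc Rinv_l ?Rmult_1_r //.
lra.
Qed.

End PinningForbiddenAssignment.

Theorem lemma3p5 (V : finType) (k d s : nat) (Phi : {set clause V}) (cstar : clause V) :
  kds_CNF k d s Phi ->
  (INR k >= log2 (INR d) + log2 (INR k) + log2 (2 * exp 1) + INR s)%R ->
  cstar \notin Phi ->
  #|vbl cstar| = k ->
  (exists c', c' \in Phi /\ vbl c' = vbl cstar /\ c' <> cstar) ->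
  ((1 - / 2 * exp (/ INR k)) ^ k <= muPr Phi (agrees_forbidden cstar))%R.
Proof.
move=> Phi_kds log_cond _ card_k [c' [c'_in [vbl_c' c'_ne]]].
have [v1 c'v1] : exists v, c' v != cstar v.
  case: (boolP [exists v, c' v != cstar v]) => [/existsP // | /existsPn same].
  by case: c'_ne; apply/ffunP => v; apply/eqP; rewrite -[_ == _]negbK same.
have v1_in : v1 \in vbl cstar.
  move: c'v1 (vbl_c') => /[swap] /setP /(_ v1); rewrite !inE.
  by case: (c' v1); case: (cstar v1).
have c'_v1 : c' v1 != Some (forbidden cstar v1) by rewrite -forbidden_vbl.
have k_gt0 : 0 < k by rewrite -card_k card_gt0; apply/set0Pn; exists v1.
have [_ [deg _]] := Phi_kds.
have d_gt0 : 0 < d.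
  apply: leq_trans (deg v1); rewrite card_gt0; apply/set0Pn; exists c'.
  by rewrite inE c'_in vbl_c'.
exact: muPr_forbidden_ge Phi_kds c'_in vbl_c' v1_in c'_v1 k_gt0 d_gt0 log_cond card_k.
Qed.
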